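(* For every integer $t\geq 2$ there exist a connected graph $G$ and a function $g:A\to B$ such that $fix(F_G)-fix(G)=t$.
   Context: A set $S\subseteq V(H)$ is a fixing set of a graph $H$ if the only automorphism of $H$ fixing every vertex of $S$ is the identity; $fix(H)$ is the minimum cardinality of a fixing set of $H$. Functigraph: let $G_1,G_2$ be disjoint copies of a connected graph $G$, with $A=V(G_1)$, $B=V(G_2)$, and let $g:A\to B$ be a function. The functigraph $F_G$ has vertex set $A\cup B$ and edge set $E(G_1)\cup E(G_2)\cup\{ug(u):u\in A\}$. *)

From mathcomp Require Import all_boot all_fingroup.
Set Implicit Arguments. Unset Strict Implicit. Unset Printing Implicit Defensive.

Definition simple_graph (T : finType) (e : rel T) : Prop :=
  symmetric e /\ irreflexive e.

Definition connected_graph (T : finType) (e : rel T) : Prop :=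
  0 < #|T| /\ forall x y : T, connect e x y.

Definition is_autb (T : finType) (e : rel T) (p : {perm T}) : bool :=
  [forall x, forall y, e (p x) (p y) == e x y].

Definition fixing_set (T : finType) (e : rel T) (S : {set T}) : bool :=
  [forall p : {perm T}, (is_autb e p && [forall x in S, p x == x]) ==> (p == 1%g)].

(* fix(H): minimum cardinality of a fixing set (setT is always fixing, so #|T| is a valid default). *)
Definition fixnum (T : finType) (e : rel T) : nat :=
  \big[minn/#|T|]_(S : {set T} | fixing_set e S) #|S|.

(* Functigraph F_G on A ∪ B = T + T (inl = copy G1 = A, inr = copy G2 = B),
   with edges E(G1) ∪ E(G2) ∪ {u g(u) : u ∈ A}. *)
Definition functigraph (T : finType) (e : rel T) (g : T -> T) : rel (T + T) :=
  fun u v =>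
    match u, v with
    | inl a, inl b => e a b
    | inr a, inr b => e a b
    | inl a, inr b => g a == b
    | inr b, inl a => g a == b
    end.

From mathcomp Require Import all_boot all_fingroup.
From mathcomp Require Import zify.

Set Implicit Arguments.
Unset Strict Implicit.
Unset Printing Implicit Defensive.

(* Take G = K_(t+2) and g constant with value b0.  Then fix(G) = t+1.  In F_G
   all of A is one class of pairwise twins (each vertex of A sees the rest of A
   and b0), and B \ {b0} is another; a transposition of twins is an
   automorphism, so a fixing set misses at most one vertex of each class,
   giving fix(F_G) >= (t+1) + t.  Conversely, fixing A \ {a0} and
   B \ {b0, b1} leaves a0, b0, b1, which are told apart by their adjacency to
   a2 and b2, so fix(F_G) = 2t+1. *)

Section FixingNumber.

Variables (T : finType) (e : rel T).

Lemma fixnum_le (S : {set T}) : fixing_set e S -> fixnum e <= #|S|.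
Proof.
move=> fixS; rewrite /fixnum -big_filter.
have : S \in [seq S <- index_enum {set T} | fixing_set e S].
  by rewrite mem_filter fixS mem_index_enum.
elim: (filter _ _) => [//|A s IHs]; rewrite inE big_cons => /orP[/eqP<-|/IHs].
  exact: geq_minl.
by apply: leq_trans; apply: geq_minr.
Qed.

Lemma fixnum_ge k :
  k <= #|T| -> (forall S, fixing_set e S -> k <= #|S|) -> k <= fixnum e.
Proof.
move=> leTk lekS; apply: (big_ind (fun m => k <= m)) => // m n km kn.
by rewrite leq_min km kn.
Qed.

Lemma is_autb_eq (p : {perm T}) :
  is_autb e p -> forall x y, e (p x) (p y) = e x y.
Proof. by move=> /forallP autp x y; apply/eqP; apply: (forallP (autp x)). Qed.

(* An automorphism fixing S pointwise maps each vertex outside S to a vertex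
   outside S with the same neighbours in S. *)
Lemma resolving_fixing_set (S : {set T}) :
  (forall u v, u \notin S -> v \notin S ->
     (forall s, s \in S -> e u s = e v s) -> u = v) ->
  fixing_set e S.
Proof.
move=> resS; apply/forallP => p; apply/implyP => /andP[autp /forall_inP fixp].
apply/eqP/permP => u; rewrite perm1.
have [uS|uS] := boolP (u \in S); first exact/eqP/fixp.
apply: resS => // [|s sS]; last by rewrite -{1}(eqP (fixp s sS)) (is_autb_eq autp).
by apply: contraNN uS => puS; rewrite -(perm_inj (eqP (fixp _ puS))).
Qed.

Definition twins (x y : T) := forall z, z != x -> z != y -> e x z = e y z.

Hypothesis e_simple : simple_graph e.
Let e_sym : symmetric e := e_simple.1.
Let e_irr : irreflexive e := e_simple.2.

Lemma twins_is_autb x y : twins x y -> is_autb e (tperm x y).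
Proof.
move=> twxy; apply/forallP => u; apply/forallP => v; apply/eqP.
case: tpermP => [->|->|/eqP ux /eqP uy]; case: tpermP => [->|->|/eqP vx /eqP vy];
  rewrite ?e_irr // 1?e_sym //.
1,2: by rewrite e_sym twxy.
all: by rewrite [RHS]e_sym twxy.
Qed.

Lemma twins_fixing_set (S : {set T}) x y :
  twins x y -> fixing_set e S -> x != y -> (x \in S) || (y \in S).
Proof.
move=> twxy /forallP/(_ (tperm x y)) fixS neq_xy.
apply/negPn/negP; rewrite negb_or => /andP[xS yS].
move: fixS; rewrite twins_is_autb //=.
have -> : [forall z in S, tperm x y z == z].
  apply/forall_inP => z zS.
  by rewrite tpermD //; [move: xS | move: yS]; apply: contraNneq => ->.
move=> /eqP/(congr1 (fun p : {perm T} => p x)); rewrite tpermL perm1 => eq_yx.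
by rewrite eq_yx eqxx in neq_xy.
Qed.

Definition twin_class (X : {set T}) :=
  {in X &, forall x y, x != y -> twins x y}.

Lemma twin_class_card (X S : {set T}) :
  twin_class X -> fixing_set e S -> #|X| <= #|X :&: S| + 1.
Proof.
move=> twX fixS; rewrite -(cardsID S X) leq_add2l.
apply/card_le1_eqP => x y; rewrite !inE => /andP[xS xX] /andP[yS yX].
apply: contraNeq xS; rewrite eq_sym => neq_xy.
by move: (twins_fixing_set (twX _ _ xX yX neq_xy) fixS neq_xy); rewrite (negbTE yS) orbF.
Qed.

Lemma fixnum_ge_twin_classes (X1 X2 : {set T}) :
  [disjoint X1 & X2] -> twin_class X1 -> twin_class X2 ->
  #|X1|.-1 + #|X2|.-1 <= fixnum e.
Proof.
move=> disX tw1 tw2.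
have cardX : #|X1| + #|X2| <= #|T|.
  by rewrite -cardsUI (disjoint_setI0 disX) cards0 addn0 max_card.
apply: fixnum_ge => [|S fixS]; first lia.
have := twin_class_card tw1 fixS; have := twin_class_card tw2 fixS.
have dis12 : [disjoint X1 :&: S & X2 :&: S].
  by apply: disjointWl (subsetIl _ _) _; apply: disjointWr (subsetIl _ _) _.
have : #|(X1 :&: S) :|: (X2 :&: S)| <= #|S|.
  by apply: subset_leq_card; rewrite subUset !subsetIr.
rewrite cardsU (disjoint_setI0 dis12) cards0 subn0; lia.
Qed.

End FixingNumber.

Definition complete_graph n : rel 'I_n := fun x y => x != y.
Arguments complete_graph : clear implicits.

Lemma complete_graph_simple n : simple_graph (complete_graph n).
Proof. by split=> [x y|x]; rewrite /complete_graph ?eqxx // eq_sym. Qed.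

Lemma complete_graph_connected n : connected_graph (complete_graph n.+1).
Proof.
split=> [|x y]; first by rewrite card_ord.
by have [->|neq_xy] := eqVneq x y; [exact: connect0 | exact: connect1].
Qed.

Lemma fixnum_complete_graph n : fixnum (complete_graph n.+1) = n.
Proof.
apply/eqP; rewrite eqn_leq; apply/andP; split.
  have fixC0 : fixing_set (complete_graph n.+1) [set~ ord0].
    by apply: resolving_fixing_set => u v; rewrite !inE !negbK => /eqP-> /eqP->.
  by have := fixnum_le fixC0; rewrite cardsC1 card_ord.
have := @fixnum_ge_twin_classes _ _ (complete_graph_simple n.+1) setT set0.
rewrite cardsT card_ord cards0 addn0; apply=> [|x y _ _ _ z zx zy|x y].
- by rewrite -setI_eq0 setI0.
- by rewrite /complete_graph eq_sym zx eq_sym zy.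
- by rewrite inE.
Qed.

Definition const_ord0 n : 'I_n.+1 -> 'I_n.+1 := fun=> ord0.
Arguments const_ord0 : clear implicits.

Section FunctigraphConst.

Variable n : nat.

Let F := functigraph (complete_graph n.+3) (const_ord0 n.+2).
Let o : 'I_n.+3 := ord0.
Let i1 : 'I_n.+3 := inord 1.
Let i2 : 'I_n.+3 := inord 2.

Lemma functigraph_simple : simple_graph F.
Proof.
by split=> [[a|a] [b|b]|[a|a]]; rewrite /F /= /complete_graph ?eqxx // eq_sym.
Qed.

Let o_i1 : (o == i1) = false.
Proof. by apply/negbTE; rewrite -val_eqE /= inordK. Qed.
Let o_i2 : (o == i2) = false.
Proof. by apply/negbTE; rewrite -val_eqE /= inordK. Qed.
Let i1_i2 : (i1 == i2) = false.
Proof. by apply/negbTE; rewrite -val_eqE /= !inordK. Qed.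

Let unfixed := [set inl o; inr o; inr i1].

Lemma card_unfixed : #|unfixed| = 3.
Proof.
by rewrite /unfixed -setUA cardsU1 cards2 !inE (inj_eq (@inr_inj _ _)) o_i1.
Qed.

(* a0, b0, b1 see (a2, b2) as (true, false), (true, true), (false, true). *)
Lemma complement_unfixed_fixing : fixing_set F (~: unfixed).
Proof.
apply: resolving_fixing_set => u v; rewrite !inE !negbK.
have a2S : inl i2 \in ~: unfixed by rewrite !inE (inj_eq inl_inj) eq_sym o_i2.
have b2S : inr i2 \in ~: unfixed.
  by rewrite !inE !(inj_eq (@inr_inj _ _)) !(eq_sym i2) o_i2 i1_i2.
move=> u3 v3 sameS; move: (sameS _ a2S) (sameS _ b2S).
by move: u3 v3 => /orP[/orP[]|] /eqP-> /orP[/orP[]|] /eqP->;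
  rewrite /F /= /complete_graph /const_ord0 -/o ?eqxx ?o_i1 ?o_i2 ?(eq_sym i1) ?i1_i2.
Qed.

Lemma fixnum_functigraph_const : fixnum F = n.+2 + n.+1.
Proof.
apply/eqP; rewrite eqn_leq; apply/andP; split.
  have := cardsC unfixed; rewrite card_unfixed card_sum card_ord => cardC.
  by apply: leq_trans (fixnum_le complement_unfixed_fixing) _; lia.
have := @fixnum_ge_twin_classes _ _ functigraph_simple
  [set inl x | x : 'I_n.+3] [set inr x | x in [set~ o]].
rewrite !card_imset ?cardsC1 ?card_ord //=; [apply | exact: inl_inj | exact: inr_inj].
- by apply/pred0P => u; apply/andP => -[/imsetP[x _ ->] /imsetP[y _]].
- move=> _ _ /imsetP[a _ ->] /imsetP[b _ ->] _ [c|c] //=.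
  by rewrite !(inj_eq inl_inj) /complete_graph => ca cb; rewrite eq_sym ca eq_sym cb.
- move=> _ _ /imsetP[a + ->] /imsetP[b + ->] _ [c|c] /=; rewrite !inE => ao bo.
    by rewrite /const_ord0 -/o !(eq_sym o) (negbTE ao) (negbTE bo).
  by rewrite !(inj_eq (@inr_inj _ _)) /complete_graph => ca cb; rewrite eq_sym ca eq_sym cb.
Qed.

End FunctigraphConst.

Theorem lemma2p10 (t : nat) (ht : 2 <= t) :
  exists (n : nat) (e : rel 'I_n),
    simple_graph e /\ connected_graph e /\
    exists g : 'I_n -> 'I_n,
      fixnum (functigraph e g) = fixnum e + t.
Proof.
case: t ht => [//|n] _.
exists n.+3, (complete_graph n.+3); split; first exact: complete_graph_simple.
split; first exact: complete_graph_connected.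
by exists (const_ord0 n.+2); rewrite fixnum_functigraph_const fixnum_complete_graph.
Qed.
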